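(* In the setting below, assume that $g(x)$ and $l(x)$ are self-reciprocal. If $r_{11}(x)\neq 1$, then $C$ is not symplectic LCD.
   Context: Let $q$ be a prime power, $F=\mathbb{F}_q$, $m\ge1$ with $\gcd(q,m)=1$, and $R=F[x]/\langle x^m-1\rangle$; elements of $R$ are represented by polynomials of degree $<m$ and identified with their coefficient vectors in $F^m$. A quasi-cyclic code of length $2m$ and index $2$ is an $R$-submodule $C\subseteq R^2$. For $a,b\in R$ let $\langle a,b\rangle_e$ be the standard dot product of their coefficient vectors. The symplectic form on $R^2$ is $\langle (a_1,a_2),(b_1,b_2)\rangle_s=\langle a_1,b_2\rangle_e-\langle a_2,b_1\rangle_e$; $C$ is symplectic LCD if $C\cap C^{\perp_s}=\{0\}$. For a nonzero polynomial $f$ of degree $k$, $f^*(x)=x^kf(x^{-1})$; $f$ is self-reciprocal if $f^*=\alpha f$ for some $\alpha\in F$. Suppose $C$ is generated as an $R$-module by $(g_{11}(x),g_{12}(x))$ and $(0,g_{22}(x))$, where $g_{11},g_{12},g_{22}\in F[x]$ satisfy: $g_{11}\mid x^m-1$, $g_{22}\mid x^m-1$, $\deg g_{12}<\deg g_{22}$, and $g_{11}g_{22}\mid (x^m-1)g_{12}$. Define $g=\gcd(g_{11},g_{22})$, $l=(x^m-1)/\mathrm{lcm}(g_{11},g_{22})$, $g_{11}=g\,g_{11}'$, $r_{11}=\gcd(g_{11}',g_{11}'^* )$ (monic). *)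

From HB Require Import structures.
From mathcomp Require Import all_boot all_order all_algebra all_field.
Set Implicit Arguments. Unset Strict Implicit. Unset Printing Implicit Defensive.
Import GRing.Theory.
Local Open Scope ring_scope.

(* Elements of R = F[x]/<x^m - 1> are represented by polynomials of size <= m
   (degree < m); their coefficient vector is (p`_0, ..., p`_(m-1)). *)

Definition xm1 (F : fieldType) (m : nat) : {poly F} := 'X^m - 1.

Definition redm (F : fieldType) (m : nat) (p : {poly F}) : {poly F} := p %% xm1 F m.

Definition dote (F : fieldType) (m : nat) (a b : {poly F}) : F :=
  \sum_(i < m) a`_i * b`_i.

Definition symp (F : fieldType) (m : nat) (u v : {poly F} * {poly F}) : F :=
  dote m u.1 v.2 - dote m u.2 v.1.

Definition inQC (F : fieldType) (m : nat) (g11 g12 g22 : {poly F})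
  (c : {poly F} * {poly F}) : Prop :=
  exists a b : {poly F}, c = (redm m (a * g11), redm m (a * g12 + b * g22)).

Definition in_symp_dual (F : fieldType) (m : nat)
  (C : {poly F} * {poly F} -> Prop) (v : {poly F} * {poly F}) : Prop :=
  [/\ (size v.1 <= m)%N, (size v.2 <= m)%N &
      forall c, C c -> symp m c v = 0].

Definition symplectic_LCD (F : fieldType) (m : nat)
  (C : {poly F} * {poly F} -> Prop) : Prop :=
  forall v, C v -> in_symp_dual m C v -> v = (0, 0).

(* reciprocal polynomial f^*(x) = x^(deg f) f(x^-1) *)
Definition recip (F : fieldType) (f : {poly F}) : {poly F} :=
  \poly_(i < size f) f`_((size f).-1 - i).

Definition self_reciprocal (F : fieldType) (f : {poly F}) : Prop :=
  f != 0 /\ exists alpha : F, recip f = alpha *: f.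

Definition monicize (F : fieldType) (p : {poly F}) : {poly F} :=
  (lead_coef p)^-1 *: p.

Definition lcmpoly (F : fieldType) (p q : {poly F}) : {poly F} :=
  (p * q) %/ gcdp p q.

From HB Require Import structures.
From mathcomp Require Import all_boot all_order all_algebra all_field.
From mathcomp Require Import fingroup cyclic zify ring.
Set Implicit Arguments.
Unset Strict Implicit.
Unset Printing Implicit Defensive.

Import GRing.Theory FinRing.Theory.
Local Open Scope ring_scope.

(* Let g11' = g11 / g and d = gcd(g11', recip g11'), which is not constant
   since r11 <> 1.  As x^m - 1 is separable, g11' is coprime to g22, hence so
   is d, and g22 divides h = (x^m - 1) / d; thus (0, h) is a nonzero codeword.
   The symplectic product of a codeword (u, v) with (0, h) is <u, h>_e, the
   coefficient of x^(m-1) in u * x^(m - size h) * recip h.  Now recip d divides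
   recip (recip g11') = g11', hence g11 and u modulo x^m - 1, while
   recip h * recip d = -(x^m - 1); so this product is a multiple of x^m - 1 of
   degree < 2m - 1, and its coefficient of x^(m-1) vanishes.  Hence (0, h) lies
   in C and in its symplectic dual. *)

Section Reversal.

Variable F : fieldType.
Implicit Types p q r : {poly F}.

(* recip p = reversep (size p) p; fixing the window instead of using the
   degree makes reversal linear *)
Definition reversep n p : {poly F} := \poly_(i < n) p`_(n.-1 - i).

Lemma coef_reversep n p i :
  (reversep n p)`_i = if (i < n)%N then p`_(n.-1 - i) else 0.
Proof. exact: coef_poly. Qed.

Lemma size_reversep n p : (size (reversep n p) <= n)%N.
Proof. exact: size_poly. Qed.

Lemma reversepD n p q : reversep n (p + q) = reversep n p + reversep n q.
Proof.
by apply/polyP=> i; rewrite coefD !coef_reversep coefD; case: ifP; rewrite ?addr0.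
Qed.

Lemma reversepZ n c p : reversep n (c *: p) = c *: reversep n p.
Proof.
by apply/polyP=> i; rewrite coefZ !coef_reversep coefZ; case: ifP; rewrite ?mulr0.
Qed.

Lemma reversepC n c : reversep n.+1 c%:P = c *: 'X^n.
Proof.
apply/polyP=> i; rewrite coef_reversep coefZ coefXn coefC /=.
case: ifP => i_le_n; last by case: eqP => ?; rewrite ?mulr0 //; lia.
by case: eqP => ?; case: eqP => ?; rewrite ?mulr0 ?mulr1 //; lia.
Qed.

Lemma reversepXM n r : (size r <= n)%N -> reversep n.+1 ('X * r) = reversep n r.
Proof.
move=> le_r_n; apply/polyP=> i; rewrite !coef_reversep coefXM /=.
case: ifP => i_le_n; case: ifP => i_lt_n //; last lia.
  by case: ifP => //; lia.
case: ifP => ?; first by congr (r`_ _); lia.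
by rewrite nth_default //; lia.
Qed.

Lemma reversep_addn n k p :
  (size p <= n)%N -> reversep (n + k) p = 'X^k * reversep n p.
Proof.
move=> le_p_n; apply/polyP=> i; rewrite coefXnM !coef_reversep.
case: (ltnP i k) => ik.
  by rewrite ifT ?nth_default //; [apply: leq_trans le_p_n _|]; lia.
by case: ifP => ?; case: ifP => ? //; try lia; congr (p`_ _); lia.
Qed.

Lemma reversepM n k p q : (size p <= n)%N -> (size q <= k.+1)%N ->
  reversep (n + k) (p * q) = reversep n p * reversep k.+1 q.
Proof.
move=> le_p_n; elim: k q => [|k IHk] q le_q_k.
  rewrite (size1_polyC le_q_k) addn0 mulrC mul_polyC reversepZ reversepC.
  by rewrite expr0 -mul_polyC mulrC alg_polyC.
pose q' := drop_poly 1 q.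
have split_q : q = (q`_0)%:P + 'X * q'.
  apply/polyP=> i; rewrite coefD coefC coefXM coef_drop_poly.
  by case: i => [|i] /=; rewrite ?addr0 ?add0r ?addn1.
have le_q'_k : (size q' <= k.+1)%N by rewrite size_drop_poly; lia.
have le_pq'_nk : (size (p * q')%R <= n + k)%N.
  by apply: leq_trans (size_mul_leq _ _) _; lia.
have -> : p * q = q`_0 *: p + 'X * (p * q').
  by rewrite {1}split_q -mul_polyC; ring.
rewrite {2}split_q addnS !reversepD reversepXM // IHk // reversepXM //.
rewrite reversepZ reversepC -addnS reversep_addn // -!mul_polyC; ring.
Qed.

Lemma reversepK n p : (size p <= n)%N -> reversep n (reversep n p) = p.
Proof.
move=> le_p_n; apply/polyP=> i; rewrite !coef_reversep.
case: ifP => [?|/negbT]; first by rewrite ifT; [congr (p`_ _)|]; lia.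
by rewrite -leqNgt => ?; rewrite nth_default //; apply: leq_trans le_p_n _.
Qed.

Lemma size_recip p : p`_0 != 0 -> size (recip p) = size p.
Proof. by move=> p0_neq0; rewrite /recip size_poly_eq // subnn. Qed.

Lemma recipK p : p`_0 != 0 -> recip (recip p) = p.
Proof.
move=> p0_neq0; rewrite {1}/recip size_recip //.
exact: (@reversepK (size p)).
Qed.

Lemma recipM p q : p != 0 -> q != 0 -> recip (p * q) = recip p * recip q.
Proof.
move=> p_neq0 q_neq0; have q_gt0 : (0 < size q)%N by rewrite size_poly_gt0.
rewrite /recip size_mul // -(prednK q_gt0) addnS -(@reversepM _ (size q).-1) //.
by rewrite prednK.
Qed.

Lemma dvdp_recip p q : q != 0 -> p %| q -> recip p %| recip q.
Proof.
move=> q_neq0 /dvdpP [k def_q].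
have /norP [k_neq0 p_neq0] : ~~ ((k == 0) || (p == 0)).
  by rewrite -mulf_eq0 -def_q.
by rewrite def_q recipM // dvdp_mulIr.
Qed.

Lemma recip_gcdp_recip_dvdp p : p`_0 != 0 -> recip (gcdp p (recip p)) %| p.
Proof.
move=> p0_neq0; have rp_neq0 : recip p != 0.
  rewrite -size_poly_eq0 size_recip // size_poly_eq0.
  by apply: contra_neq p0_neq0 => ->; rewrite coef0.
rewrite -[X in _ %| X](recipK p0_neq0).
exact: dvdp_recip rp_neq0 (dvdp_gcdr _ _).
Qed.

Lemma dote_reversep n (u w : {poly F}) : (size u <= n.+1)%N -> (size w <= n.+1)%N ->
  dote n.+1 u w = (u * reversep n.+1 w)`_n.
Proof.
move=> le_u_n le_w_n; rewrite /dote coefM; apply: eq_bigr => j _.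
by rewrite coef_reversep ifT /=; [congr (_ * w`_ _); case: j => j /=|]; lia.
Qed.

End Reversal.

Section CyclicModulus.

Variables (F : fieldType) (m : nat).
Hypothesis m_gt0 : (0 < m)%N.
Local Notation X := (xm1 F m).

Lemma size_xm1 : size X = m.+1.
Proof. exact: size_Xn_sub_1. Qed.

Lemma xm1_neq0 : X != 0.
Proof. by rewrite -size_poly_eq0 size_xm1. Qed.

Lemma coef0_xm1 : X`_0 = -1.
Proof. by rewrite coefB coefXn coef1 eq_sym (gtn_eqF m_gt0) sub0r. Qed.

Lemma coef0_dvdp_xm1 p : p %| X -> p`_0 != 0.
Proof.
move=> /dvdpP [k def_X]; apply/eqP => p0_eq0; move/eqP: coef0_xm1.
by rewrite def_X coef0M p0_eq0 mulr0 eq_sym oppr_eq0 oner_eq0.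
Qed.

Lemma recip_xm1 : recip X = - X.
Proof.
rewrite /recip size_xm1; apply/polyP=> i.
rewrite -/(reversep _ _) coef_reversep !(coefN, coefB, coefXn, coef1) /=.
case: ifP => le_i_m.
  have -> : (m - i == m)%N = (i == 0)%N by apply/eqP/eqP; lia.
  have -> : (m - i == 0)%N = (i == m) by apply/eqP/eqP; lia.
  by rewrite opprB.
have /andP [/negPf -> /negPf ->] : (i != m) && (i != 0)%N.
  by apply/andP; split; apply/eqP; lia.
by rewrite subrr oppr0.
Qed.

Lemma size_redm (p : {poly F}) : (size (redm m p) <= m)%N.
Proof. by rewrite -ltnS -size_xm1 ltn_modp xm1_neq0. Qed.

Lemma redm_id (p : {poly F}) : (size p <= m)%N -> redm m p = p.
Proof. by move=> le_p_m; rewrite /redm modp_small // size_xm1. Qed.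

(* a multiple of x^m - 1 of degree < 2m - 1 is (x^m - 1) times a polynomial
   of degree < m - 1, so its coefficient of x^(m-1) vanishes *)
Lemma coef_dvdp_xm1_eq0 P :
  X %| P -> (size P < m.*2)%N -> P`_m.-1 = 0.
Proof.
move=> /dvdpP [k ->] le_P_2m.
have [->|k_neq0] := eqVneq k 0; first by rewrite mul0r coef0.
move: le_P_2m; rewrite size_mul ?xm1_neq0 // size_xm1 -addnn => le_P_2m.
rewrite mulrBr mulr1 coefB coefMXn ifT; last lia.
by rewrite sub0r nth_default ?oppr0 //; move: le_P_2m; set s := size k; lia.
Qed.

Lemma dote_eq0_dvdp_xm1 (u w : {poly F}) : (size u <= m)%N -> (size w <= m)%N ->
  X %| u * reversep m w -> dote m u w = 0.
Proof.
move=> le_u_m le_w_m dvd_X; rewrite -(prednK m_gt0) dote_reversep ?prednK //.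
apply: coef_dvdp_xm1_eq0; rewrite ?prednK //.
apply: leq_ltn_trans (size_mul_leq _ _) _.
move: le_u_m (size_reversep m w); rewrite -addnn.
by set a := size u; set b := size (reversep m w); lia.
Qed.

Lemma divp_xm1_neq0 d : d %| X -> X %/ d != 0.
Proof.
move=> d_dvd_X; apply: contra_neq xm1_neq0 => h_eq0.
by rewrite -(divpK d_dvd_X) h_eq0 mul0r.
Qed.

Lemma size_divp_xm1 d : d %| X -> (1 < size d)%N -> (size (X %/ d)%R <= m)%N.
Proof.
move=> d_dvd_X d_gt1; have d_neq0 : d != 0 := dvdpN0 d_dvd_X xm1_neq0.
move: size_xm1 d_gt1; rewrite -{1}(divpK d_dvd_X) size_mul ?divp_xm1_neq0 //.
by set a := size (X %/ d)%R; set b := size d; lia.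
Qed.

(* reversep m h = x^(m - size h) * recip h and recip h * recip d = -(x^m - 1) *)
Lemma dvdp_xm1_recip_cofactor d : d %| X -> (1 < size d)%N ->
  X %| recip d * reversep m (X %/ d).
Proof.
move=> d_dvd_X d_gt1; have le_h_m := size_divp_xm1 d_dvd_X d_gt1.
set h := X %/ d in le_h_m *.
have -> : reversep m h = 'X^(m - size h) * recip h.
  by rewrite -{1}(subnKC le_h_m) reversep_addn.
rewrite mulrCA (mulrC (recip d)) -recipM ?divp_xm1_neq0 ?(dvdpN0 d_dvd_X xm1_neq0) //.
by rewrite divpK // recip_xm1 mulrN dvdpNr dvdp_mull.
Qed.

End CyclicModulus.

Lemma coprimep_divp_gcdp (F : fieldType) (P a b : {poly F}) :
  separable_poly P -> a %| P -> coprimep (a %/ gcdp a b) b.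
Proof.
move=> sepP a_dvd_P; set a' := a %/ gcdp a b; set c := gcdp a' b.
have c_dvd_g : c %| gcdp a b.
  rewrite dvdp_gcd dvdp_gcdr andbT (dvdp_trans (dvdp_gcdl _ _)) //.
  by rewrite divp_dvd ?dvdp_gcdl.
have cc_dvd_P : c * c %| P.
  apply: dvdp_trans a_dvd_P; rewrite -[a in _ %| a](divpK (dvdp_gcdl a b)).
  by rewrite dvdp_mul ?dvdp_gcdl.
by have := separable_coprime sepP cc_dvd_P; rewrite !coprimep_def gcdpp.
Qed.

Lemma monicize_size1 (F : fieldType) (p : {poly F}) :
  p != 0 -> (size p <= 1)%N -> monicize p = 1.
Proof.
move=> p_neq0 /size1_polyC def_p; move: p_neq0.
rewrite def_p /monicize lead_coefC polyC_eq0 => c_neq0.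
by rewrite -mul_polyC -polyCM mulVf.
Qed.

Lemma natr_card_finField (F : finFieldType) : #|F|%:R = 0 :> F.
Proof. by rewrite -zmodXgE -cardsT expg_cardG // inE. Qed.

Lemma natr_neq0_coprime_card (F : finFieldType) m :
  coprime #|F| m -> m%:R != 0 :> F.
Proof.
move=> coprime_m; have [p p_prime p_char] := finPcharP F.
apply/eqP=> m_eq0; have p_dvd_m : (p %| m)%N by rewrite (dvdn_pcharf p_char) m_eq0.
have p_dvd_F : (p %| #|F|)%N by rewrite (dvdn_pcharf p_char) natr_card_finField.
have : (p %| gcdn #|F| m)%N by rewrite dvdn_gcd p_dvd_F p_dvd_m.
by rewrite (eqP coprime_m) dvdn1 => /eqP p_eq1; rewrite p_eq1 in p_prime.
Qed.

Section QuasiCyclicCode.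

Variables (F : fieldType) (m : nat) (g11 g12 g22 : {poly F}).
Hypothesis m_gt0 : (0 < m)%N.
Implicit Types h : {poly F}.
Local Notation C := (inQC m g11 g12 g22).

Lemma inQC_0 h : g22 %| h -> (size h <= m)%N -> C (0, h).
Proof.
move=> g22_dvd_h le_h_m; exists 0, (h %/ g22).
by rewrite !mul0r add0r divpK // /redm mod0p -/(redm m h) redm_id.
Qed.

Lemma in_symp_dual_0 h : (size h <= m)%N -> xm1 F m %| g11 * reversep m h ->
  in_symp_dual m C (0, h).
Proof.
move=> le_h_m dvd_X; split; rewrite ?size_poly0 //= => _ [a [b ->]].
rewrite /symp /= [dote _ _ 0]/dote big1 => [|i _]; last by rewrite coef0 mulr0.
rewrite subr0 dote_eq0_dvdp_xm1 ?size_redm //.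
apply/modp_eq0P; rewrite /redm mulrC modp_mul mulrC -mulrA.
by apply/modp_eq0P; apply: dvdp_mull.
Qed.

End QuasiCyclicCode.

Theorem lemma5p4 (F : finFieldType) (m : nat) (g11 g12 g22 : {poly F}) :
  (0 < m)%N -> coprime #|F| m ->
  g11 %| xm1 F m -> g22 %| xm1 F m ->
  (size g12 < size g22)%N ->
  (g11 * g22) %| (xm1 F m * g12) ->
  let g := gcdp g11 g22 in
  let l := xm1 F m %/ lcmpoly g11 g22 in
  let g11' := g11 %/ g in
  let r11 := monicize (gcdp g11' (recip g11')) in
  self_reciprocal g -> self_reciprocal l ->
  r11 != 1 ->
  ~ symplectic_LCD m (inQC m g11 g12 g22).
Proof.
move=> m_gt0 coprime_m g11_dvd_X g22_dvd_X _ _ g l g11' r11 _ _ r11_neq1 LCD.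
set X := xm1 F m in g11_dvd_X g22_dvd_X.
have sepX : separable_poly X.
  by apply: separable_Xn_sub_1; apply: natr_neq0_coprime_card.
have g11'_dvd_g11 : g11' %| g11 by rewrite divp_dvd ?dvdp_gcdl.
have g11'_dvd_X : g11' %| X := dvdp_trans g11'_dvd_g11 g11_dvd_X.
pose d := gcdp g11' (recip g11').
have g11'0_neq0 : g11'`_0 != 0 := coef0_dvdp_xm1 m_gt0 g11'_dvd_X.
have g11'_neq0 : g11' != 0 by apply: contra_neq g11'0_neq0 => ->; rewrite coef0.
have d_gt1 : (1 < size d)%N.
  rewrite ltnNge; apply: contra_neqN r11_neq1; apply: monicize_size1.
  by rewrite gcdp_eq0 negb_and g11'_neq0.
have d_dvd_X : d %| X := dvdp_trans (dvdp_gcdl _ _) g11'_dvd_X.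
have coprime_d_g22 : coprimep d g22.
  exact: coprimep_dvdr (dvdp_gcdl _ _) (coprimep_divp_gcdp _ sepX g11_dvd_X).
set h := X %/ d.
have g22_dvd_h : g22 %| h.
  by rewrite -(Gauss_dvdpl _ (_ : coprimep g22 d)) ?divpK // coprimep_sym.
have le_h_m : (size h <= m)%N := size_divp_xm1 m_gt0 d_dvd_X d_gt1.
have recip_d_dvd_g11 : recip d %| g11 :=
  dvdp_trans (recip_gcdp_recip_dvdp g11'0_neq0) g11'_dvd_g11.
have X_dvd : X %| g11 * reversep m h.
  apply: dvdp_trans (dvdp_xm1_recip_cofactor m_gt0 d_dvd_X d_gt1) _.
  exact: dvdp_mul recip_d_dvd_g11 (dvdpp _).
have [] := LCD _ (inQC_0 g11 g12 m_gt0 g22_dvd_h le_h_m)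
  (in_symp_dual_0 g12 g22 m_gt0 le_h_m X_dvd).
by apply/eqP; rewrite divp_xm1_neq0.
Qed.
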